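(* Let $n\ge 2$ and let $\Lambda_n$ be a cycle ordering of the chains of a symmetric chain decomposition of $Q_n$. Then in the corresponding Hamilton cycle, any two chains $C$ and $C'$ with $|C|\equiv|C'|\pmod 4$ are traversed in the same direction (both upwards or both downwards).
   Context: $Q_n$ is the hypercube on $\{0,1\}^n$; level $k$ is the set of strings with $k$ ones. A symmetric chain is a path $(x_k,\ldots,x_{n-k})$ in $Q_n$ with $x_i$ in level $i$; a symmetric chain decomposition (SCD) is a partition of the vertices of $Q_n$ into symmetric chains. The length $|C|$ of a chain is its number of edges; its bottom end is its vertex in the lowest level and its top end its vertex in the highest level. A cycle ordering of the chains of an SCD is a cyclic ordering of all its chains such that the chains together with, for each pair of cyclically consecutive chains, one connecting edge of $Q_n$ form a Hamilton cycle, where the connecting edges join consecutive chains alternately at their top ends and at their bottom ends, with the exception that two consecutive chains of length $1$ are joined by an edge from the bottom end of one of them to the top end of the other. *)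

From mathcomp Require Import all_boot.
Set Implicit Arguments. Unset Strict Implicit. Unset Printing Implicit Defensive.

Definition vertex (n : nat) := {ffun 'I_n -> bool}.

Definition vzero (n : nat) : vertex n := [ffun => false].

Definition level (n : nat) (x : vertex n) : nat := #|[pred i | x i]|.

Definition qadj (n : nat) (x y : vertex n) : bool := #|[pred i | x i != y i]| == 1.

(* A chain is listed from its bottom end to its top end. *)
Definition chain (n : nat) := seq (vertex n).

Definition sym_chain (n : nat) (c : chain n) : Prop :=
  exists k, [/\ 2 * k <= n, size c = (n - 2 * k).+1,
    (forall i, i < size c -> level (nth (vzero n) c i) = k + i) &
    (forall i, i.+1 < size c -> qadj (nth (vzero n) c i) (nth (vzero n) c i.+1))].

Definition clen (n : nat) (c : chain n) : nat := (size c).-1.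
Definition cbot (n : nat) (c : chain n) : vertex n := head (vzero n) c.
Definition ctop (n : nat) (c : chain n) : vertex n := last (vzero n) c.

Definition SCD (n : nat) (S : seq (chain n)) : Prop :=
  (forall c, c \in S -> sym_chain c) /\
  (forall x : vertex n, count_mem x (flatten S) = 1).

(* Traversal direction: [true] = upwards (enter at bottom end, leave at top end),
   [false] = downwards. *)
Definition cstart (n : nat) (c : chain n) (up : bool) := if up then cbot c else ctop c.
Definition cend (n : nat) (c : chain n) (up : bool) := if up then ctop c else cbot c.

(* A cycle ordering of the chains of the SCD [S]: the cyclic sequence [L] of all
   chains of [S] (the list order fixes an orientation of the cycle), together
   with the direction [d`_i] in which the resulting Hamilton cycle traverses the
   chain [L`_i].  Edges join consecutive chains at their top ends or at
   their bottom ends, alternately (so the direction flips), except that two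
   consecutive chains of length 1 are joined bottom end to top end (so the
   direction is kept). *)
Definition cycle_ordering (n : nat) (S : seq (chain n)) (L : seq (chain n))
    (d : seq bool) : Prop :=
  [/\ perm_eq L S, size d = size L &
    forall i, i < size L ->
      let j := i.+1 %% size L in
      let C := nth [::] L i in let C' := nth [::] L j in
      let u := nth false d i in let u' := nth false d j in
      qadj (cend C u) (cstart C' u') /\
      (if (clen C == 1) && (clen C' == 1) then u' = u else u' = ~~ u)].

From mathcomp Require Import all_boot zify.
Set Implicit Arguments. Unset Strict Implicit. Unset Printing Implicit Defensive.

(* Every edge of Q_n changes the parity of the level, and a symmetric chain
   from level k to level n - k has its bottom and top levels summing to n.
   Hence the parity of [u + level of the top end of C], where [u] records the
   direction of C, is the same for consecutive chains: a top-top or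
   bottom-bottom link flips both summands, and a bottom-to-top link between two
   chains of length 1 flips neither.  So this parity is constant around the
   cycle, and since [2 (level of top) = n + |C|], two chains whose lengths agree
   mod 4 have top ends of the same level parity, hence the same direction. *)

Lemma level_addE n (x y : vertex n) :
  level x + level y = #|[pred i | x i != y i]| + #|[pred i | x i && y i]|.*2.
Proof.
have cardE (P : pred 'I_n) : #|[pred i | P i]| = \sum_i (P i : nat).
  by rewrite -sum1_card big_mkcond; apply: eq_bigr => i _; rewrite inE; case: (P i).
rewrite /level !cardE -!big_split -muln2 big_distrl -big_split /=.
by apply: eq_bigr => i _; case: (x i); case: (y i).
Qed.

Lemma qadj_odd_level n (x y : vertex n) : qadj x y -> odd (level y) = ~~ odd (level x).
Proof.
move=> /eqP xy; have := level_addE x y; rewrite xy => /(congr1 odd).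
by rewrite !oddD odd_double /=; case: (odd (level x)); case: (odd (level y)).
Qed.

Section SymmetricChain.
Variables (n : nat) (c : chain n).
Hypothesis symc : sym_chain c.

Lemma sym_chain_level_top : level (ctop c) = level (cbot c) + clen c.
Proof.
case: symc => k [_ sc lc _].
by rewrite /ctop /cbot -nth_last -nth0 !lc ?sc // /clen sc addn0.
Qed.

Lemma sym_chain_level_bot_top : level (cbot c) + level (ctop c) = n.
Proof.
rewrite sym_chain_level_top; case: symc => k [k2n sc lc _].
rewrite /cbot -nth0 lc ?sc // /clen sc /=; lia.
Qed.

End SymmetricChain.

Lemma sym_chain_odd_level_top n (c c' : chain n) :
  sym_chain c -> sym_chain c' -> clen c = clen c' %[mod 4] ->
  odd (level (ctop c)) = odd (level (ctop c')).
Proof.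
move=> symc symc' len_cc'; apply: (can_inj oddb); rewrite -!modn2.
have := sym_chain_level_bot_top symc; have := sym_chain_level_bot_top symc'.
have := sym_chain_level_top symc; have := sym_chain_level_top symc'.
lia.
Qed.

Definition phase n (c : chain n) (up : bool) := up (+) odd (level (ctop c)).

Lemma phase_link n (C C' : chain n) (u u' : bool) :
  sym_chain C -> sym_chain C' -> qadj (cend C u) (cstart C' u') ->
  (if (clen C == 1) && (clen C' == 1) then u' = u else u' = ~~ u) ->
  phase C' u' = phase C u.
Proof.
move=> symC symC' /qadj_odd_level adj dir.
have odd_bot (D : chain n) : sym_chain D -> odd (level (cbot D)) = odd n (+) odd (level (ctop D)).
  by move=> /sym_chain_level_bot_top/(congr1 odd); rewrite oddD => <-; rewrite addbK.
move: dir adj; rewrite /phase /cend /cstart.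
case: ifP => [/andP[/eqP len1 /eqP len1'] ->| _ ->]; case: u => /=.
- by rewrite (sym_chain_level_top symC') len1' addn1 /= => ->; rewrite negbK.
- by rewrite (sym_chain_level_top symC) len1 addn1 /= => ->.
- by move=> ->.
- by rewrite !odd_bot // -addbN => /addbI ->; rewrite negbK.
Qed.

Section CycleOrdering.
Variables (n : nat) (S L : seq (chain n)) (d : seq bool).
Hypotheses (scdS : SCD S) (ordL : cycle_ordering S L d).

Lemma cycle_ordering_sym_chain i : i < size L -> sym_chain (nth [::] L i).
Proof.
case: scdS => symS _; case: ordL => permLS _ _ iL.
by apply: symS; rewrite -(perm_mem permLS) mem_nth.
Qed.

Lemma cycle_ordering_phase i :
  i < size L -> phase (nth [::] L i) (nth false d i) = phase (nth [::] L 0) (nth false d 0).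
Proof.
elim: i => // i IH iL; rewrite -IH; last exact: ltnW.
case: ordL => _ _ /(_ i (ltnW iL)) /=; rewrite modn_small // => -[adj dir].
by apply: phase_link => //; apply: cycle_ordering_sym_chain => //; exact: ltnW.
Qed.

End CycleOrdering.

Theorem lemma16 (n : nat) (S L : seq (chain n)) (d : seq bool) :
  2 <= n -> SCD S -> cycle_ordering S L d ->
  forall i j, i < size L -> j < size L ->
    clen (nth [::] L i) = clen (nth [::] L j) %[mod 4] ->
    nth false d i = nth false d j.
Proof.
move=> _ scdS ordL i j iL jL len_ij.
have := cycle_ordering_phase scdS ordL jL; rewrite -(cycle_ordering_phase scdS ordL iL).
have symi := cycle_ordering_sym_chain scdS ordL iL.
have symj := cycle_ordering_sym_chain scdS ordL jL.
by rewrite /phase (sym_chain_odd_level_top symi symj len_ij) => /addIb.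
Qed.
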